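(* Let $q,n,d,m$ be positive integers with $q\ge 2$, and let $C\subseteq[q]^n$ be a code with minimum Hamming distance at least $d$. Let $j\in\{1,\dots,n\}$ and $\alpha\in[q]$, and let $B\subseteq C$ be the set of all codewords $w\in C$ with $w_j=\alpha$. Suppose that for every coordinate $i\neq j$, every symbol of $[q]$ occurs exactly $m$ times among the entries $w_i$, $w\in B$. If $n-d$ does not divide $m(n-1)$, then for every $u\in C\setminus B$ there exists $v\in B$ with $d_H(u,v)\notin\{d,n\}$.
   Context: $[q]=\{0,1,\dots,q-1\}$. For $u,v\in[q]^n$, $d_H(u,v)$ is the number of coordinates $i$ with $u_i\neq v_i$. The minimum distance of a code is the minimum of $d_H$ over distinct codewords. *)

From mathcomp Require Import all_boot.
Set Implicit Arguments. Unset Strict Implicit. Unset Printing Implicit Defensive.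

(* Words of length n over the alphabet [q] = {0,...,q-1}. Coordinates are
   indexed by 'I_n (0-based: coordinate i+1 of the paper is index i). *)
Definition word (q n : nat) := {ffun 'I_n -> 'I_q}.

Definition hamming (q n : nat) (u v : word q n) : nat :=
  #|[set i : 'I_n | u i != v i]|.

Definition min_dist_ge (q n : nat) (C : {set word q n}) (d : nat) : Prop :=
  forall u v, u \in C -> v \in C -> u != v -> d <= hamming u v.

From mathcomp Require Import all_boot.
Set Implicit Arguments. Unset Strict Implicit. Unset Printing Implicit Defensive.

(* For words u, v the number of coordinates where they agree is
   n - d_H(u,v).  Fix u in C \ B, so u_j <> alpha while every v in B has
   v_j = alpha.  Counting the pairs (v, i) with v in B and u_i = v_i
   coordinate by coordinate, coordinate j contributes nothing and every
   other coordinate i contributes exactly m (the words of B taking the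
   symbol u_i at i), so the total number of agreements is m(n-1).
   If every v in B had d_H(u,v) in {d, n}, each summand n - d_H(u,v) would
   be n - d or 0, hence a multiple of n - d, and so n - d would divide
   m(n-1), contrary to the hypothesis. *)

Section Agreements.

Context {q n : nat}.

Definition agreement (u v : word q n) : {set 'I_n} := [set i | u i == v i].

(* Agreements and disagreements partition the n coordinates. *)
Lemma card_agreement (u v : word q n) :
  #|agreement u v| = n - hamming u v.
Proof.
have -> : n - hamming u v = #|~: [set i | u i != v i]|.
  by rewrite cardsCs setCK card_ord.
by rewrite /agreement; apply: eq_card => i; rewrite !inE negbK.
Qed.

Lemma sum_card_agreement (B : {set word q n}) (j : 'I_n) (alpha : 'I_q)
    (m : nat) (u : word q n) :
  (forall v, v \in B -> v j = alpha) ->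
  (forall (i : 'I_n) (a : 'I_q), i != j -> #|[set w in B | w i == a]| = m) ->
  u j != alpha ->
  \sum_(v in B) #|agreement u v| = m * (n - 1).
Proof.
move=> Bj hbal uj.
have count_pairs :
    \sum_(v in B) #|agreement u v| = \sum_(i < n) #|[set v in B | v i == u i]|.
  under eq_bigr => v _ do rewrite -sum1_card big_mkcond /=.
  rewrite exchange_big /=; apply: eq_bigr => i _.
  rewrite -sum1_card big_mkcond [RHS]big_mkcond /=; apply: eq_bigr => v _.
  by rewrite !inE eq_sym; case: (v \in B).
have col_j : [set v in B | v j == u j] = set0.
  apply/setP => v; rewrite !inE.
  by apply/andP => -[/Bj -> /eqP uja]; rewrite uja eqxx in uj.
rewrite count_pairs (bigD1 j) //= col_j cards0 add0n.
rewrite (eq_bigr (fun=> m)) => [|i ij]; last exact: hbal.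
by rewrite sum_nat_const cardC1 card_ord mulnC subn1.
Qed.

Lemma dvd_sum_card_agreement (B : {set word q n}) (d : nat) (u : word q n) :
  (forall v, v \in B -> (hamming u v == d) || (hamming u v == n)) ->
  (n - d) %| \sum_(v in B) #|agreement u v|.
Proof.
move=> hdist; apply: dvdn_sum => v /hdist.
by rewrite card_agreement => /orP [] /eqP ->; rewrite ?subnn ?dvdn0.
Qed.

End Agreements.

Theorem proposition5p2 (q n d m : nat) (hq : 2 <= q) (hn : 0 < n) (hd : 0 < d)
  (hm : 0 < m) (C : {set word q n}) (hC : min_dist_ge C d)
  (j : 'I_n) (alpha : 'I_q) (B : {set word q n})
  (hB : B = [set w in C | w j == alpha])
  (hbal : forall (i : 'I_n) (a : 'I_q), i != j ->
            #|[set w in B | w i == a]| = m)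
  (hdiv : ~~ ((n - d) %| m * (n - 1))) :
  forall u, u \in C :\: B ->
    exists2 v, v \in B & (hamming u v != d) && (hamming u v != n).
Proof.
move=> u /setDP [uC uB].
have uj : u j != alpha by apply: contra uB => uja; rewrite hB inE uC.
have Bj v : v \in B -> v j = alpha by rewrite hB inE => /andP [_ /eqP].
apply/exists_inP; apply: contraR hdiv; rewrite negb_exists_in => /forall_inP only_d_or_n.
rewrite -(sum_card_agreement Bj hbal uj); apply: dvd_sum_card_agreement => v vB.
by move: (only_d_or_n v vB); rewrite negb_and !negbK.
Qed.
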